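(* Let $n\in\mathbb{N}_0$, $k\in\mathbb{N}$, $x\in\mathbb{R}$ and $\lambda\in\mathbb{C}\setminus\{0\}$. Then $$E_{n}^{\ast(-k)}(x;\lambda)=\frac{k!\,2^{n-k}}{\lambda^{k}}\,y_{3}\!\left(n,k;\lambda^{2};\frac{x+k}{2k},\frac{x-k}{2k}\right).$$
   Context: For $k\in\mathbb{N}_0$ and $\lambda\ne0$, the second kind Apostol type Euler polynomials of order $-k$ are defined by $$\left(\frac{\lambda e^{t}+\lambda^{-1}e^{-t}}{2}\right)^{k}e^{tx}=\sum_{n=0}^{\infty}E_{n}^{\ast(-k)}(x;\lambda)\frac{t^{n}}{n!}.$$ For $a,b\in\mathbb{R}$, $\mu\in\mathbb{C}$, $k\in\mathbb{N}_0$, the numbers $y_3(n,k;\mu;a,b)$ are defined by $\frac{e^{bkt}}{k!}(\mu e^{(a-b)t}+1)^{k}=\sum_{n\ge0}y_{3}(n,k;\mu;a,b)\frac{t^{n}}{n!}$. *)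

From HB Require Import structures.
From mathcomp Require Import all_boot all_order all_algebra.
From mathcomp Require Import complex.
From mathcomp Require Import reals.
Set Implicit Arguments. Unset Strict Implicit. Unset Printing Implicit Defensive.
Import Order.TTheory GRing.Theory Num.Theory.
Local Open Scope ring_scope.

(* Formal power series are represented by truncations: the polynomial
   [expS a N] is the truncation at degree N of the power series e^{a t}
   = sum_i a^i t^i / i!.  The coefficient of t^n (n <= N) of a product of
   such series is the coefficient of t^n of the product of truncations. *)
Definition expS (F : fieldType) (a : F) (N : nat) : {poly F} :=
  \poly_(i < N.+1) (a ^+ i / (i`!)%:R).

Definition Estar (F : fieldType) (n k : nat) (x lam : F) : F :=
  (n`!)%:R *
  ((2^-1 *: (lam *: expS 1 n + lam^-1 *: expS (-1) n)) ^+ k * expS x n)`_n.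

Definition y3 (F : fieldType) (n k : nat) (mu a b : F) : F :=
  (n`!)%:R *
  (((k`!)%:R)^-1 *: expS (b * k%:R) n * (mu *: expS (a - b) n + 1) ^+ k)`_n.

From mathcomp Require Import all_boot all_order all_algebra.
From mathcomp Require Import complex.
From mathcomp Require Import reals ring.
Import Order.TTheory GRing.Theory Num.Theory.
Local Open Scope ring_scope.

(* The generating function of E^{*(-k)} factors as
     ((lam e^t + lam^-1 e^-t)/2)^k e^{xt} = (2 lam)^-k e^{(x-k)t} (lam^2 e^{2t} + 1)^k,
   which is (2 lam)^-k k! times the generating function of y_3(., k; lam^2; a, b)
   taken at 2t, as soon as a - b = 1 and b k = (x - k)/2; the substitution t := 2t
   multiplies the n-th coefficient by 2^n.  The truncations [expS a N] only obey the
   exponential laws modulo t^(N+1), i.e. after applying [take_poly N.+1]. *)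

Section TakePolyMul.
Variable R : comNzRingType.
Implicit Types p q : {poly R}.

Lemma take_polyMl m p q : take_poly m (take_poly m p * q) = take_poly m (p * q).
Proof.
by rewrite -{2}(poly_take_drop m p) mulrDl take_polyD mulrAC take_polyMXn_0 addr0.
Qed.

Lemma take_polyMr m p q : take_poly m (p * take_poly m q) = take_poly m (p * q).
Proof. by rewrite mulrC take_polyMl mulrC. Qed.

Lemma take_poly_exp m p k : take_poly m (take_poly m p ^+ k) = take_poly m (p ^+ k).
Proof.
elim: k => [|k IHk]; first by rewrite !expr0.
by rewrite !exprS -take_polyMr IHk take_polyMr take_polyMl.
Qed.

Lemma coef_comp_polyZX c p i : (p \Po (c *: 'X))`_i = c ^+ i * p`_i.
Proof.
rewrite comp_polyE (eq_bigr (fun j : 'I_(size p) => (c ^+ j * p`_j) *: 'X^j)).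
  rewrite -(poly_def _ (fun j => c ^+ j * p`_j)) coef_poly.
  by case: ltnP => // /(nth_default 0) ->; rewrite mulr0.
by move=> j _; rewrite exprZn scalerA mulrC.
Qed.

End TakePolyMul.

Section ExpSeries.
Variable F : fieldType.
Implicit Types (a b c : F) (N : nat).

Lemma take_expS N a : take_poly N.+1 (expS a N) = expS a N.
Proof. by rewrite take_poly_id // size_poly. Qed.

Lemma expS0 N : expS (0 : F) N = 1.
Proof.
apply/polyP => i; rewrite coef_poly coef1 ltnS.
by case: i => [|i]; rewrite ?expr0 ?divr1 ?expr0n ?mul0r //; case: ifP.
Qed.

Lemma expS_dilate N c a : expS (c * a) N = expS a N \Po (c *: 'X).
Proof.
by apply/polyP => i; rewrite coef_comp_polyZX !coef_poly; case: ltnP;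
  rewrite ?mulr0 // exprMn mulrA.
Qed.

Lemma y3_diff1 n k (mu a b : F) : a - b = 1 ->
  y3 n k mu a b =
    (n`!)%:R * ((k`!)%:R^-1 * (expS (b * k%:R) n * (mu *: expS 1 n + 1) ^+ k)`_n).
Proof. by move=> ab; rewrite /y3 ab -scalerAl coefZ. Qed.

Hypothesis F0 : [pchar F] =i pred0.

Let natf_eq0 m : (m%:R == 0 :> F) = (m == 0)%N.
Proof. exact: (pcharf0P F).1 F0 m. Qed.

Let fact_neq0 m : (m`!)%:R != 0 :> F.
Proof. by rewrite natf_eq0 -lt0n fact_gt0. Qed.

Let two_neq0 : 2 != 0 :> F.
Proof. by rewrite natf_eq0. Qed.

Lemma expSD N a b : take_poly N.+1 (expS a N * expS b N) = expS (a + b) N.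
Proof.
apply/polyP => i; rewrite coef_take_poly coef_poly; case: ifP => // iN.
rewrite coefM exprDn mulr_suml.
rewrite -(big_mkord xpredT (fun j => (expS a N)`_j * (expS b N)`_(i - j))).
rewrite -(big_mkord xpredT (fun j => a ^+ (i - j) * b ^+ j *+ 'C(i, j) / (i`!)%:R)).
rewrite big_nat_rev /=; apply: eq_big_nat => j /andP[_ ji].
rewrite add0n subSS; have ji' : (j <= i)%N by rewrite -ltnS.
rewrite subKn // !coef_poly (leq_ltn_trans (leq_subr _ _) iN) (leq_ltn_trans ji' iN).
have binom : 'C(i, j)%:R != 0 :> F by rewrite natf_eq0 -lt0n bin_gt0.
rewrite -(bin_fact ji') !natrM -mulr_natr.
by field; rewrite binom !fact_neq0.
Qed.

Lemma expSMn N a k : take_poly N.+1 (expS a N ^+ k) = expS (a * k%:R) N.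
Proof.
elim: k => [|k IHk]; first by rewrite expr0 mulr0 expS0 take_poly_id // size_poly1.
by rewrite exprS -take_polyMr IHk expSD -nat1r mulrDr mulr1.
Qed.


Lemma Estar_dilate n k (x lam : F) : lam != 0 ->
  Estar n k x lam = (n`!)%:R * ((2 * lam)^-1 ^+ k * 2 ^+ n *
     (expS ((x - k%:R) / 2) n * (lam ^+ 2 *: expS 1 n + 1) ^+ k)`_n).
Proof.
move=> lam0; set c := (2 * lam)^-1; set h := (x - k%:R) / 2.
set L := lam ^+ 2 *: expS 1 n + 1.
have half : take_poly n.+1 (2^-1 *: (lam *: expS 1 n + lam^-1 *: expS (-1) n)) =
            take_poly n.+1 (c *: (expS (-1) n * (L \Po (2 *: 'X)))).
  rewrite comp_polyD comp_polyZ -expS_dilate mulr1 comp_polyC.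
  rewrite mulrDr mulr1 -scalerAr !(take_polyZ, take_polyD) expSD // !take_expS.
  have -> : -1 + 2 = 1 :> F by rewrite addrC -[2]/(1 + 1) addrK.
  rewrite !scalerDr !scalerA; congr (_ *: _ + _ *: _).
    by rewrite /c; field; rewrite lam0 two_neq0.
  by rewrite /c; field; rewrite lam0 two_neq0.
have shift : take_poly n.+1 (expS (-1) n ^+ k * expS x n) = expS (2 * h) n.
  rewrite -take_polyMl expSMn // expSD // /h; congr expS; field; exact: two_neq0.
suff key : take_poly n.+1 ((2^-1 *: (lam *: expS 1 n + lam^-1 *: expS (-1) n)) ^+ k
                          * expS x n) =
           c ^+ k *: take_poly n.+1 ((expS h n * L ^+ k) \Po (2 *: 'X)).
  have coef_n (p : {poly F}) : p`_n = (take_poly n.+1 p)`_n.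
    by rewrite coef_take_poly ltnSn.
  by rewrite /Estar (coef_n (_ * expS x n)) key coefZ -coef_n coef_comp_polyZX !mulrA.
rewrite -take_polyMl -take_poly_exp half take_poly_exp take_polyMl.
rewrite exprZn exprMn -scalerAl take_polyZ mulrAC -take_polyMl shift.
by rewrite expS_dilate -rmorphXn -comp_polyM.
Qed.

Lemma Estar_y3 n k (x lam a b : F) :
  lam != 0 -> a - b = 1 -> b * k%:R = (x - k%:R) / 2 ->
  Estar n k x lam = (k`!)%:R * 2 ^ (n%:Z - k%:Z) / lam ^+ k * y3 n k (lam ^+ 2) a b.
Proof.
move=> lam0 ab bk; rewrite Estar_dilate // y3_diff1 // bk.
rewrite expfzDr // -exprnN -exprnP exprVn exprMn.
by field; rewrite fact_neq0 !expf_neq0.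
Qed.

End ExpSeries.

Local Open Scope complex_scope.

Theorem mainTheorem6 (R : realType) (n k : nat) (x : R) (lam : R[i]) :
  (0 < k)%N -> lam != 0 ->
  Estar n k (x%:C) lam =
    (k`!)%:R * (2 : R[i]) ^ (n%:Z - k%:Z) / lam ^+ k *
    y3 n k (lam ^+ 2) (((x + k%:R) / (2 * k%:R))%:C) (((x - k%:R) / (2 * k%:R))%:C).
Proof.
move=> k0 lam0; apply: Estar_y3 => //; first exact: pchar_num.
  rewrite -rmorphB -(rmorph1 (real_complex R)); congr (_%:C).
  by field; rewrite pnatr_eq0 -lt0n k0.
rewrite -(rmorph_nat (real_complex R) k) -(rmorph_nat (real_complex R) 2).
rewrite -rmorphM -rmorphB -(fmorph_div (real_complex R)); congr (_%:C).
by field; rewrite pnatr_eq0 -lt0n k0.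
Qed.
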